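(* Let $k\ge 4$, $n=2k-1$, $\eta=(\eta_1<\dots<\eta_l)\in\mathbb{D}_k\setminus\{(3,k-3)\}$, and let $Y_{2\eta^*}$ be the Young diagram whose main diagonal consists of exactly the cells $c_{1,1},\dots,c_{l+1,l+1}$ and which satisfies $h_{1,1}=2n-4$, $h_{i,i}=2\eta_{l-(i-2)}$ for $2\le i\le l+1$, and $a(c_{i,i})=l(c_{i,i})+1$ for $1\le i\le l+1$. Let $\lambda$ be the partition whose parts are the hook lengths of the first-column cells of $Y_{2\eta^*}$. Then $n-2$ is not a part of $\lambda$ (equivalently, $n-2\in\mathbb{N}_0\setminus\lambda$).
   Context: $\mathbb{D}_N$ is the set of partitions of $N$ into distinct parts, i.e. sequences $(\eta_1<\dots<\eta_l)$ of positive integers with sum $N$ and $l\ge 2$. Young diagrams are in English convention: rows top to bottom, columns left to right, $c_{i,j}$ the cell in row $i$, column $j$; arm $a(c_{i,j})$ = number of cells to its right in its row, leg $l(c_{i,j})$ = number of cells below it in its column, hook length $h_{i,j}=a+l+1$. *)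

From mathcomp Require Import all_boot.
Set Implicit Arguments. Unset Strict Implicit. Unset Printing Implicit Defensive.

(* A Young diagram (English convention) is represented by its sequence of row
   lengths, top to bottom: a weakly decreasing sequence of positive integers.
   Rows and columns are indexed from 1, as in the paper: cell c_{i,j}. *)
Definition young (Y : seq nat) : bool :=
  sorted geq Y && all (fun x => 0 < x) Y.

Definition row_len (Y : seq nat) (i : nat) : nat := nth 0 Y i.-1.

Definition in_diagram (Y : seq nat) (i j : nat) : bool :=
  (1 <= i <= size Y) && (1 <= j <= row_len Y i).

Definition arm (Y : seq nat) (i j : nat) : nat := row_len Y i - j.

Definition leg (Y : seq nat) (i j : nat) : nat :=
  count (fun r => j <= r) (drop i Y).

Definition hook (Y : seq nat) (i j : nat) : nat := arm Y i j + leg Y i j + 1.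

Definition distinct_partition (N : nat) (eta : seq nat) : bool :=
  sorted ltn eta && all (fun x => 0 < x) eta && (sumn eta == N) && (2 <= size eta).

Definition first_column_hooks (Y : seq nat) : seq nat :=
  [seq hook Y i 1 | i <- iota 1 (size Y)].

From mathcomp Require Import all_boot.
From mathcomp Require Import zify.

(* With positive rows the leg of a first-column cell c_{i,1} is the number of
   rows below it, so h_{i,1} = row_len i + (size Y - i).  Balancing the arm and
   leg of c_{1,1} forces h_{1,1} = 2 size Y, i.e. size Y = n - 2.  Hence
   h_{i,1} = n - 2 means row i has length exactly i: the diagonal cell c_{i,i}
   would have arm 0, whereas every diagonal cell has arm = leg + 1 >= 1. *)

Section FirstColumn.

Variable Y : seq nat.
Hypothesis Ypos : all (fun x => 0 < x) Y.

Lemma leg_col1 i : leg Y i 1 = size Y - i.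
Proof.
have : all (fun x => 0 < x) (drop i Y).
  by move: Ypos; rewrite -{1}(cat_take_drop i Y) all_cat => /andP[].
by rewrite /leg all_count => /eqP ->; rewrite size_drop.
Qed.

Lemma row_len_gt0 i : 1 <= i <= size Y -> 0 < row_len Y i.
Proof.
case: i => [|i] //= i_le; apply: (allP Ypos).
by rewrite /row_len mem_nth.
Qed.

Lemma hook_col1 i : 1 <= i <= size Y -> hook Y i 1 = row_len Y i + (size Y - i).
Proof.
move=> i_range; have := @row_len_gt0 i i_range.
rewrite /hook /arm leg_col1; lia.
Qed.

Lemma hook11_balanced : arm Y 1 1 = leg Y 1 1 + 1 -> hook Y 1 1 = 2 * size Y.
Proof.
rewrite /hook leg_col1 => armE; rewrite armE.
have [/size0nil Y0 | Y_gt0] := posnP (size Y); last lia.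
by move: armE; rewrite /arm /row_len Y0.
Qed.

Lemma mem_first_column_hooks_size :
  size Y \in first_column_hooks Y -> exists2 i, 1 <= i <= size Y & row_len Y i = i.
Proof.
case/mapP=> i; rewrite mem_iota add1n ltnS => i_range.
by rewrite hook_col1 // => hookE; exists i => //; move: i_range hookE; lia.
Qed.

End FirstColumn.

Theorem corollary3p18 (k n : nat) (eta Y : seq nat) :
  4 <= k -> n = 2 * k - 1 ->
  distinct_partition k eta -> eta <> [:: 3; k - 3] ->
  young Y ->
  (* the main diagonal consists exactly of c_{1,1}, ..., c_{l+1,l+1} *)
  (forall i, 1 <= i -> in_diagram Y i i = (i <= size eta + 1)) ->
  hook Y 1 1 = 2 * n - 4 ->
  (* h_{i,i} = 2 eta_{l-(i-2)}, eta_m being nth 0 eta m.-1 *)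
  (forall i, 2 <= i <= size eta + 1 ->
     hook Y i i = 2 * nth 0 eta (size eta - (i - 2)).-1) ->
  (forall i, 1 <= i <= size eta + 1 -> arm Y i i = leg Y i i + 1) ->
  n - 2 \notin first_column_hooks Y.
Proof.
move=> _ _ _ _ /andP[_ Ypos] diagE hook11 _ armE.
have size_l : 1 <= 1 <= size eta + 1 by rewrite addn1.
have sizeY : size Y = n - 2.
  by move: hook11; rewrite hook11_balanced ?armE //; lia.
rewrite -sizeY; apply/negP.
case/(mem_first_column_hooks_size Y Ypos)=> i /andP[i_ge1 i_le] row_i.
have diag_i : in_diagram Y i i by rewrite /in_diagram row_i i_ge1 i_le leqnn.
rewrite diagE // in diag_i.
by have := armE i; rewrite i_ge1 diag_i /arm row_i subnn addn1 => /(_ isT).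
Qed.
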